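(* Assume the CFL condition, let $k\in\mathbb R$, and let $\eta_i^n=|U_i^n-k|$ and $Q_i^n=\hat f(U_i^n\vee k,U_{i+1}^n\vee k)-\hat f(U_i^n\wedge k,U_{i+1}^n\wedge k)$. Then for all $i,n$, $$\eta_i^{n+1}-\eta_i^n+\Delta t\,D_-Q_i^n-\Delta t\,D_-D_+|A(U_i^n)-A(k)|\le\Delta t\,\operatorname{sgn}(U_i^{n+1}-k)\,b\,\mathcal L\langle U^n\rangle_i .$$
   Context: Let $f,a:\mathbb R\to\mathbb R$ be Lipschitz, $a\ge0$ bounded, $f(0)=0$, $A(u)=\int_0^ua(s)ds$, $b\ge0$, $\lambda\in(0,1)$, $c_\lambda>0$, $\mathcal L[u](x)=c_\lambda\int_{|z|>0}\frac{u(x+z)-u(x)}{|z|^{1+\lambda}}dz$. Let $\hat f:\mathbb R^2\to\mathbb R$ be $C^1$ and Lipschitz, consistent ($\hat f(u,u)=f(u)$), nondecreasing in its first and nonincreasing in its second argument. Grid: $x_i=i\Delta x$, $I_i=[x_i,x_{i+1})$, $t_n=n\Delta t$. Weights $G^i_j=\int_{I_i}\mathcal L[\mathbf 1_{I_j}](x)dx$; these satisfy $G^i_j\ge0$ for $i\ne j$, $\sum_j|G^i_j|<\infty$, $\sum_iG^i_j=\sum_jG^i_j=0$, $G^i_j=G^j_i$, $G^{i+1}_{j+1}=G^i_j$, and $G^i_i=-d_\lambda\Delta x^{1-\lambda}$ with $d_\lambda=c_\lambda\big(\int_{|z|<1}|z|^{-\lambda}dz+\int_{|z|>1}|z|^{-1-\lambda}dz\big)$.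 $D_\pm U_i=\pm(U_{i\pm1}-U_i)/\Delta x$, $\mathcal L\langle U\rangle_i=\frac1{\Delta x}\sum_jG^i_jU_j$. Scheme: $U_i^{n+1}=U_i^n-\Delta t\,D_-\big[\hat f(U_i^n,U_{i+1}^n)-D_+A(U_i^n)\big]+\Delta t\,b\,\mathcal L\langle U^n\rangle_i$, $U^0_i=\frac1{\Delta x}\int_{I_i}u_0$ with $u_0\in L^1(\mathbb R)\cap BV(\mathbb R)$. CFL condition: $\frac{\Delta t}{\Delta x}(\|\partial_{1}\hat f\|_\infty+\|\partial_{2}\hat f\|_\infty)+\frac{2\Delta t}{\Delta x^2}\|a\|_\infty+b\,d_\lambda\frac{\Delta t}{\Delta x^\lambda}\le1$. $x\vee y=\max\{x,y\}$, $x\wedge y=\min\{x,y\}$; $\operatorname{sgn}$ is the sign function (any value in $[-1,1]$ at $0$). *)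

From Stdlib Require Import Reals Lra Lia ZArith List Classical ClassicalDescription IndefiniteDescription.
Open Scope R_scope.

Definition zpartial (a : Z -> R) (N : nat) : R :=
  sum_f_R0 (fun k => a (Z.of_nat k - Z.of_nat N)%Z) (2 * N).

(** The (symmetric-limit) value of  sum_{j in Z} a j  (0 if it does not converge). *)
Definition zsum (a : Z -> R) : R :=
  match excluded_middle_informative (exists l, Un_cv (zpartial a) l) with
  | left h => proj1_sig (constructive_indefinite_description _ h)
  | right _ => 0
  end.

Definition zsummable_abs (a : Z -> R) : Prop :=
  exists M, forall N, zpartial (fun j => Rabs (a j)) N <= M.

Definition Dm (dx : R) (V : Z -> R) (i : Z) : R := (V i - V (i - 1)%Z) / dx.
Definition Dp  (dx : R) (V : Z -> R) (i : Z) : R := (V (i + 1)%Z - V i) / dx.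

Definition Lop (G : Z -> Z -> R) (dx : R) (V : Z -> R) (i : Z) : R :=
  / dx * zsum (fun j => G i j * V j).

(** d_lambda = c_lambda ( int_{|z|<1} |z|^{-lambda} dz + int_{|z|>1} |z|^{-1-lambda} dz )
    = c_lambda ( 2/(1-lambda) + 2/lambda ). *)
Definition d_lambda (c lam : R) : R := c * (2 / (1 - lam) + 2 / lam).

Definition Lipschitz (g : R -> R) : Prop :=
  exists L, forall x y, Rabs (g x - g y) <= L * Rabs (x - y).

Definition Lipschitz2 (g : R -> R -> R) : Prop :=
  exists L, forall u v u' v', Rabs (g u v - g u' v') <= L * (Rabs (u - u') + Rabs (v - v')).

Definition continuous2 (g : R -> R -> R) : Prop :=
  forall u v eps, 0 < eps -> exists delta, 0 < delta /\
    forall u' v', Rabs (u' - u) < delta -> Rabs (v' - v) < delta ->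
      Rabs (g u' v' - g u v) < eps.

Fixpoint variation (u : R -> R) (l : list R) : R :=
  match l with
  | x :: ((y :: _) as t) => Rabs (u y - u x) + variation u t
  | _ => 0
  end.
Fixpoint increasing (l : list R) : Prop :=
  match l with
  | x :: ((y :: _) as t) => x <= y /\ increasing t
  | _ => True
  end.
Definition BV (u : R -> R) : Prop :=
  exists M, forall l, increasing l -> variation u l <= M.

(** u in L^1(R) (Riemann-integral rendering): integrals of |u| over compact
    intervals are uniformly bounded, and |u| is integrable on them. *)
Definition L1 (u : R -> R) : Prop :=
  (forall a b, a <= b -> inhabited (Riemann_integrable (fun x => Rabs (u x)) a b)) /\
  exists M, forall a b (pr : Riemann_integrable (fun x => Rabs (u x)) a b),
    a <= b -> RiemannInt pr <= M.

Definition is_sgn (x s : R) : Prop :=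
  (0 < x -> s = 1) /\ (x < 0 -> s = -1) /\ (x = 0 -> -1 <= s <= 1).

From Stdlib Require Import Reals ZArith Lra.
Open Scope R_scope.

(* Crandall–Majda argument.  Without the nonlocal term the scheme is the
   three-point map [U_i^{n+1} = H(U_{i-1}^n, U_i^n, U_{i+1}^n)], which the CFL
   condition makes nondecreasing in each argument, and constants are fixed points.
   Hence [H(u ∨ k) ≥ H(u) ∨ k] and [H(u ∧ k) ≤ H(u) ∧ k] componentwise, so
   [|H(u) - k| ≤ H(u ∨ k) - H(u ∧ k)]; by consistency the right-hand side is
   exactly the discrete entropy update [|u_i - k| - Δt D_- Q_i + Δt D_- D_+ |A(u_i) - A(k)|].
   The nonlocal term is added after the monotone step and is multiplied by the
   sign of [U_i^{n+1} - k]. *)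

Lemma Lipschitz_continuity_pt (g : R -> R) : Lipschitz g -> forall x, continuity_pt g x.
Proof.
  intros [L HL] x eps Heps.
  set (M := Rmax L 0 + 1).
  assert (HM : 0 < M) by (unfold M; generalize (Rmax_r L 0); lra).
  exists (eps / M); split; [apply Rdiv_lt_0_compat; lra |].
  intros y [_ Hy]; simpl in *; unfold R_dist in *.
  apply Rle_lt_trans with (M * Rabs (y - x)).
  - apply Rle_trans with (L * Rabs (y - x)); [apply HL |].
    apply Rmult_le_compat_r; [apply Rabs_pos | unfold M; generalize (Rmax_l L 0); lra].
  - apply Rmult_lt_reg_l with (/ M); [apply Rinv_0_lt_compat; lra |].
    rewrite <- Rmult_assoc, Rinv_l by lra. unfold Rdiv in Hy. lra.
Qed.

Lemma primitive_increment_bounds (a A : R -> R) (M : R) :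
  (forall x, continuity_pt a x) -> (forall s, 0 <= a s <= M) ->
  (forall u, exists pr : Riemann_integrable a 0 u, A u = RiemannInt pr) ->
  forall u u', u <= u' -> 0 <= A u' - A u <= M * (u' - u).
Proof.
  intros Ha_cont Ha_bnd HA u u' Huu.
  destruct (HA u) as [p0u Eu], (HA u') as [p0u' Eu'].
  assert (puu' : Riemann_integrable a u u') by (apply continuity_implies_RiemannInt; auto).
  replace (A u' - A u) with (RiemannInt puu')
    by (rewrite Eu, Eu', <- (RiemannInt_P26 p0u puu' p0u'); ring).
  split.
  - rewrite <- (Rmult_0_l (u' - u)), <- (RiemannInt_P15 (RiemannInt_P14 u u' 0)).
    apply RiemannInt_P19; [lra | intros; apply Ha_bnd].
  - rewrite <- (RiemannInt_P15 (RiemannInt_P14 u u' M)).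
    apply RiemannInt_P19; [lra | intros; apply Ha_bnd].
Qed.

Lemma MVT_increment_bound (g g' : R -> R) (N : R) :
  (forall x, derivable_pt_lim g x (g' x)) -> (forall x, Rabs (g' x) <= N) ->
  forall u u', u <= u' -> Rabs (g u' - g u) <= N * (u' - u).
Proof.
  intros Hd HN u u' Huu. destruct (Req_dec u u') as [<- | Hne].
  - rewrite Rminus_diag, Rabs_R0. lra.
  - destruct (MVT_cor2 g g' u u') as [x [-> _]]; [lra | auto |].
    rewrite Rabs_mult, (Rabs_right (u' - u)) by lra.
    apply Rmult_le_compat_r; [lra | apply HN].
Qed.

Lemma d_lambda_pos (c lam : R) : 0 < c -> 0 < lam < 1 -> 0 < d_lambda c lam.
Proof.
  intros Hc Hlam. unfold d_lambda.
  apply Rmult_lt_0_compat; [lra |].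
  apply Rplus_lt_0_compat; apply Rdiv_lt_0_compat; lra.
Qed.

Lemma is_sgn_spec (x s : R) : is_sgn x s -> Rabs s <= 1 /\ Rabs x = s * x.
Proof.
  intros [Hpos [Hneg Hzero]].
  destruct (Rtotal_order x 0) as [Hx | [Hx | Hx]].
  - rewrite (Hneg Hx), !Rabs_left by lra. split; lra.
  - rewrite Hx, Rabs_R0, Rmult_0_r. split; [apply Rabs_le |]; lra.
  - rewrite (Hpos Hx), Rabs_R1, Rabs_right by lra. split; lra.
Qed.

Lemma Rmax_sub_Rmin (x k : R) : Rmax x k - Rmin x k = Rabs (x - k).
Proof.
  unfold Rmax, Rmin, Rabs. destruct (Rle_dec x k), (Rcase_abs (x - k)); lra.
Qed.

Lemma nondecreasing_Rmax_sub_Rmin (g : R -> R) (x k : R) :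
  (forall u u', u <= u' -> g u <= g u') ->
  g (Rmax x k) - g (Rmin x k) = Rabs (g x - g k).
Proof.
  intros Hg. destruct (Rle_dec x k) as [Hxk | Hxk].
  - pose proof (Hg x k Hxk).
    rewrite Rmax_right, Rmin_left, Rabs_left1 by lra. ring.
  - pose proof (Hg k x ltac:(lra)).
    rewrite Rmax_left, Rmin_right, Rabs_right by lra. ring.
Qed.

Lemma monotone_step_entropy (H : R -> R -> R -> R) (k s v u w : R) :
  (forall v u w v' u' w', v <= v' -> u <= u' -> w <= w' -> H v u w <= H v' u' w') ->
  H k k k = k -> Rabs s <= 1 ->
  s * (H v u w - k)
    <= H (Rmax v k) (Rmax u k) (Rmax w k) - H (Rmin v k) (Rmin u k) (Rmin w k).
Proof.
  intros Hmono Hk Hs.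
  assert (Hup1 : H v u w <= H (Rmax v k) (Rmax u k) (Rmax w k))
    by (apply Hmono; apply Rmax_l).
  assert (Hup2 : k <= H (Rmax v k) (Rmax u k) (Rmax w k))
    by (rewrite <- Hk at 1; apply Hmono; apply Rmax_r).
  assert (Hlo1 : H (Rmin v k) (Rmin u k) (Rmin w k) <= H v u w)
    by (apply Hmono; apply Rmin_l).
  assert (Hlo2 : H (Rmin v k) (Rmin u k) (Rmin w k) <= k)
    by (rewrite <- Hk at 4; apply Hmono; apply Rmin_r).
  apply Rle_trans with (Rabs (H v u w - k)).
  - apply Rle_trans with (Rabs (s * (H v u w - k))); [apply Rle_abs |].
    rewrite Rabs_mult. rewrite <- (Rmult_1_l (Rabs (H v u w - k))) at 2.
    apply Rmult_le_compat_r; [apply Rabs_pos | exact Hs].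
  - unfold Rabs. destruct (Rcase_abs (H v u w - k)); lra.
Qed.

Section ConservativeStep.

Variables (fhat : R -> R -> R) (A : R -> R) (dt dx : R).
Hypotheses (Hdt : 0 < dt) (Hdx : 0 < dx).

Definition conservative_step (v u w : R) : R :=
  u - dt * ((fhat u w - (A w - A u) / dx) - (fhat v u - (A u - A v) / dx)) / dx.

Lemma conservative_step_const (k : R) : conservative_step k k k = k.
Proof. unfold conservative_step. field. lra. Qed.

Lemma conservative_step_grid (V : Z -> R) (i : Z) :
  V i - dt * Dm dx (fun j => fhat (V j) (V (j + 1)%Z) - Dp dx (fun m => A (V m)) j) i
  = conservative_step (V (i - 1)%Z) (V i) (V (i + 1)%Z).
Proof.
  unfold conservative_step, Dm, Dp. replace (i - 1 + 1)%Z with i by ring. field. lra.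
Qed.

Hypothesis A_nondecreasing : forall u u', u <= u' -> A u <= A u'.

Lemma conservative_step_Rmax_sub_Rmin (V : Z -> R) (i : Z) (k : R) :
  conservative_step (Rmax (V (i - 1)%Z) k) (Rmax (V i) k) (Rmax (V (i + 1)%Z) k)
  - conservative_step (Rmin (V (i - 1)%Z) k) (Rmin (V i) k) (Rmin (V (i + 1)%Z) k)
  = Rabs (V i - k)
    - dt * Dm dx (fun j => fhat (Rmax (V j) k) (Rmax (V (j + 1)%Z) k)
                           - fhat (Rmin (V j) k) (Rmin (V (j + 1)%Z) k)) i
    + dt * Dm dx (Dp dx (fun j => Rabs (A (V j) - A k))) i.
Proof.
  unfold conservative_step, Dm, Dp. replace (i - 1 + 1)%Z with i by ring.
  rewrite <- Rmax_sub_Rmin, <- !(nondecreasing_Rmax_sub_Rmin A) by exact A_nondecreasing.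
  field. lra.
Qed.

Lemma conservative_step_mono_l (v v' u w : R) :
  (forall v v' u, v <= v' -> fhat v u <= fhat v' u) ->
  v <= v' -> conservative_step v u w <= conservative_step v' u w.
Proof.
  intros Hmon1 Hv.
  pose proof (Hmon1 v v' u Hv). pose proof (A_nondecreasing v v' Hv).
  assert (Hf : 0 <= dt / dx * (fhat v' u - fhat v u))
    by (apply Rmult_le_pos; [apply Rlt_le, Rdiv_lt_0_compat |]; lra).
  assert (HA : 0 <= dt / (dx * dx) * (A v' - A v))
    by (apply Rmult_le_pos; [apply Rlt_le, Rdiv_lt_0_compat |]; nra).
  enough (conservative_step v' u w - conservative_step v u w
          = dt / dx * (fhat v' u - fhat v u) + dt / (dx * dx) * (A v' - A v)) by lra.
  unfold conservative_step. field. lra.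
Qed.

Lemma conservative_step_mono_r (v u w w' : R) :
  (forall u w w', w <= w' -> fhat u w' <= fhat u w) ->
  w <= w' -> conservative_step v u w <= conservative_step v u w'.
Proof.
  intros Hmon2 Hw.
  pose proof (Hmon2 u w w' Hw). pose proof (A_nondecreasing w w' Hw).
  assert (Hf : 0 <= dt / dx * (fhat u w - fhat u w'))
    by (apply Rmult_le_pos; [apply Rlt_le, Rdiv_lt_0_compat |]; lra).
  assert (HA : 0 <= dt / (dx * dx) * (A w' - A w))
    by (apply Rmult_le_pos; [apply Rlt_le, Rdiv_lt_0_compat |]; nra).
  enough (conservative_step v u w' - conservative_step v u w
          = dt / dx * (fhat u w - fhat u w') + dt / (dx * dx) * (A w' - A w)) by lra.
  unfold conservative_step. field. lra.
Qed.

Variables (L1 L2 La : R).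
Hypotheses
  (Hfhat_l : forall w u u', u <= u' -> fhat u' w - fhat u w <= L1 * (u' - u))
  (Hfhat_r : forall v u u', u <= u' -> fhat v u - fhat v u' <= L2 * (u' - u))
  (HA_lip : forall u u', u <= u' -> A u' - A u <= La * (u' - u))
  (HCFL : dt / dx * (L1 + L2) + 2 * dt / (dx * dx) * La <= 1).

Lemma conservative_step_mono_c (v u u' w : R) :
  u <= u' -> conservative_step v u w <= conservative_step v u' w.
Proof.
  intros Hu.
  assert (Hf : dt / dx * ((fhat u' w - fhat u w) + (fhat v u - fhat v u'))
               <= dt / dx * ((L1 + L2) * (u' - u))).
  { apply Rmult_le_compat_l; [apply Rlt_le, Rdiv_lt_0_compat; lra |].
    generalize (Hfhat_l w u u' Hu) (Hfhat_r v u u' Hu); lra. }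
  assert (HA : 2 * dt / (dx * dx) * (A u' - A u) <= 2 * dt / (dx * dx) * (La * (u' - u))).
  { apply Rmult_le_compat_l; [apply Rlt_le, Rdiv_lt_0_compat; nra | auto]. }
  assert (Hcfl : (dt / dx * (L1 + L2) + 2 * dt / (dx * dx) * La) * (u' - u) <= u' - u).
  { rewrite <- (Rmult_1_l (u' - u)) at 2. apply Rmult_le_compat_r; lra. }
  enough (conservative_step v u' w - conservative_step v u w
          = (u' - u) - dt / dx * ((fhat u' w - fhat u w) + (fhat v u - fhat v u'))
            - 2 * dt / (dx * dx) * (A u' - A u)) by nra.
  unfold conservative_step. field. lra.
Qed.

Lemma conservative_step_monotone :
  (forall v v' u, v <= v' -> fhat v u <= fhat v' u) ->
  (forall u w w', w <= w' -> fhat u w' <= fhat u w) ->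
  forall v u w v' u' w', v <= v' -> u <= u' -> w <= w' ->
  conservative_step v u w <= conservative_step v' u' w'.
Proof.
  intros Hmon1 Hmon2 v u w v' u' w' Hv Hu Hw.
  apply Rle_trans with (conservative_step v' u w); [apply conservative_step_mono_l; auto |].
  apply Rle_trans with (conservative_step v' u' w); [apply conservative_step_mono_c; auto |].
  apply conservative_step_mono_r; auto.
Qed.

End ConservativeStep.

Theorem mainTheorem10
  (f a : R -> R) (A : R -> R) (b lam c : R)
  (fhat : R -> R -> R) (d1 d2 : R -> R -> R)
  (G : Z -> Z -> R) (dx dt : R) (u0 : R -> R) (U : nat -> Z -> R)
  (normd1 normd2 norma : R) (k : R)
  (* f, a *)
  (Hf_lip : Lipschitz f) (Ha_lip : Lipschitz a) (Hf0 : f 0 = 0)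
  (Ha_nonneg : forall s, 0 <= a s)
  (Ha_bdd : exists M, forall s, Rabs (a s) <= M)
  (HA : forall u, exists pr : Riemann_integrable a 0 u, A u = RiemannInt pr)
  (Hb : 0 <= b) (Hlam : 0 < lam < 1) (Hc : 0 < c)
  (* numerical flux: C^1 (continuous partial derivatives d1, d2), Lipschitz,
     consistent, monotone *)
  (Hd1 : forall u v, derivable_pt_lim (fun x => fhat x v) u (d1 u v))
  (Hd2 : forall u v, derivable_pt_lim (fun y => fhat u y) v (d2 u v))
  (Hd1c : continuous2 d1) (Hd2c : continuous2 d2)
  (Hfhat_lip : Lipschitz2 fhat)
  (Hcons : forall u, fhat u u = f u)
  (Hmon1 : forall u u' v, u <= u' -> fhat u v <= fhat u' v)
  (Hmon2 : forall u v v', v <= v' -> fhat u v' <= fhat u v)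
  (* grid *)
  (Hdx : 0 < dx) (Hdt : 0 < dt)
  (* weights G^i_j *)
  (HG_off : forall i j, i <> j -> 0 <= G i j)
  (HG_sum : forall i, zsummable_abs (fun j => G i j))
  (HG_row : forall i, zsum (fun j => G i j) = 0)
  (HG_col : forall j, zsum (fun i => G i j) = 0)
  (HG_sym : forall i j, G i j = G j i)
  (HG_tr : forall i j, G (i + 1)%Z (j + 1)%Z = G i j)
  (HG_diag : forall i, G i i = - d_lambda c lam * Rpower dx (1 - lam))
  (* initial datum *)
  (Hu0_L1 : L1 u0) (Hu0_BV : BV u0)
  (HU0 : forall i : Z, exists pr : Riemann_integrable u0 (IZR i * dx) (IZR (i + 1) * dx),
           U 0%nat i = RiemannInt pr / dx)
  (* scheme *)
  (HU : forall (n : nat) (i : Z),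
      U (S n) i = U n i
        - dt * Dm dx (fun j => fhat (U n j) (U n (j + 1)%Z)
                                   - Dp dx (fun m => A (U n m)) j) i
        + dt * b * Lop G dx (U n) i)
  (* CFL condition *)
  (Hn1 : is_lub (fun r => exists u v, r = Rabs (d1 u v)) normd1)
  (Hn2 : is_lub (fun r => exists u v, r = Rabs (d2 u v)) normd2)
  (Hna : is_lub (fun r => exists s, r = Rabs (a s)) norma)
  (HCFL : dt / dx * (normd1 + normd2) + 2 * dt / (dx * dx) * norma
          + b * d_lambda c lam * (dt / Rpower dx lam) <= 1) :
  forall (n : nat) (i : Z) (s : R),
    is_sgn (U (S n) i - k) s ->
    let eta := fun (m : nat) (j : Z) => Rabs (U m j - k) in
    let Q := fun j => fhat (Rmax (U n j) k) (Rmax (U n (j + 1)%Z) k)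
                    - fhat (Rmin (U n j) k) (Rmin (U n (j + 1)%Z) k) in
    eta (S n) i - eta n i + dt * Dm dx Q i
      - dt * Dm dx (Dp dx (fun j => Rabs (A (U n j) - A k))) i
    <= dt * s * b * Lop G dx (U n) i.
Proof.
  intros n i s Hs eta Q.
  assert (Ha_bnd : forall x, 0 <= a x <= norma).
  { intro x. split; [auto |]. apply Rle_trans with (Rabs (a x)); [apply Rle_abs | apply Hna; eauto]. }
  pose proof (primitive_increment_bounds a A norma (Lipschitz_continuity_pt a Ha_lip) Ha_bnd HA)
    as HA_incr.
  assert (Hfhat_l : forall w u u', u <= u' -> fhat u' w - fhat u w <= normd1 * (u' - u)).
  { intros w u u' Hu. eapply Rle_trans; [apply Rle_abs |].
    apply (MVT_increment_bound (fun x => fhat x w) (fun x => d1 x w)); auto.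
    intro x. apply Hn1. eauto. }
  assert (Hfhat_r : forall v u u', u <= u' -> fhat v u - fhat v u' <= normd2 * (u' - u)).
  { intros v u u' Hu. eapply Rle_trans; [apply Rle_abs |]. rewrite Rabs_minus_sym.
    apply (MVT_increment_bound (fun x => fhat v x) (fun x => d2 v x)); auto.
    intro x. apply Hn2. eauto. }
  assert (Hnonlocal : 0 <= b * d_lambda c lam * (dt / Rpower dx lam)).
  { pose proof (d_lambda_pos c lam Hc Hlam). unfold Rpower.
    apply Rmult_le_pos; [nra | apply Rlt_le, Rdiv_lt_0_compat; [lra | apply exp_pos]]. }
  assert (HA_mono : forall u u', u <= u' -> A u <= A u')
    by (intros u u' Hu; generalize (HA_incr u u' Hu); lra).
  destruct (is_sgn_spec _ _ Hs) as [Hs1 Hs2].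
  pose proof (monotone_step_entropy (conservative_step fhat A dt dx) k s
                (U n (i - 1)%Z) (U n i) (U n (i + 1)%Z)) as Hentropy.
  rewrite conservative_step_Rmax_sub_Rmin in Hentropy by auto.
  unfold eta, Q. rewrite Hs2, HU, conservative_step_grid by auto.
  assert (Hstep := Hentropy
    (conservative_step_monotone fhat A dt dx Hdt Hdx HA_mono normd1 normd2 norma
       Hfhat_l Hfhat_r (fun u u' Hu => proj2 (HA_incr u u' Hu)) ltac:(lra) Hmon1 Hmon2)
    (conservative_step_const fhat A dt dx Hdx k) Hs1).
  lra.
Qed.
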